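(* Let $G=(V,E)$ be an event graph. There exists a unique sink component $\mathcal C$ of $\mathrm{dec}(G)$ such that for every $v\in V$, $\mathcal C$ is the only sink component of $\mathrm{dec}(G)$ that is reachable (by a directed walk) from the node $(v,\emptyset)$.
   Context: An event graph is a finite, connected, undirected graph $G=(V,E)$, with $n=|V|$, in which every node $v$ carries a label that is either $\mathtt{i}x_v$ (insertion of $x_v$) or $\mathtt{d}x_v$ (deletion of $x_v$), where $x_v$ is an element of a finite universe $\mathcal U$. Write $\mathcal U_{|V}=\{x_v : v\in V\}$. It is assumed that for each $x\in\mathcal U_{|V}$ at least one node is labeled $\mathtt{i}x$ and at least one node is labeled $\mathtt{d}x$. The decorated graph $\mathrm{dec}(G)$ is the directed graph with vertex set $V\times 2^{\mathcal U_{|V}}$ in which $((u,X),(v,Y))$ is an edge if and only if $\{u,v\}\in E$ and $Y=X\cup\{x_v\}$ when $v$ is labeled $\mathtt{i}x_v$, respectively $Y=X\setminus\{x_v\}$ when $v$ is labeled $\mathtt{d}x_v$. A sink component of $\mathrm{dec}(G)$ is a strongly connected component of $\mathrm{dec}(G)$ from which no edge leads to a different strongly connected component. *)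

From mathcomp Require Import all_boot.
Set Implicit Arguments. Unset Strict Implicit. Unset Printing Implicit Defensive.

Section EventGraph.
Variables (V U : finType) (e : rel V) (ins : V -> bool) (x : V -> U).

Definition UV : {set U} := [set x v | v in V].

Definition dnode := {p : V * {set U} | p.2 \subset UV}.

Definition upd (v : V) (X : {set U}) : {set U} :=
  if ins v then x v |: X else X :\ x v.

Definition dec_edge : rel dnode :=
  fun p q => e (val p).1 (val q).1 && ((val q).2 == upd (val q).1 (val p).2).

Definition dreach (p q : dnode) : bool := connect dec_edge p q.

Definition is_scc (C : {set dnode}) : Prop :=
  exists a : dnode, C = [set b | dreach a b && dreach b a].

Definition is_sink (C : {set dnode}) : Prop :=
  is_scc C /\ forall a b : dnode, a \in C -> dec_edge a b -> b \in C.

Definition start (v : V) : dnode := exist _ (v, set0) (sub0set UV).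

Definition reachable_from (v : V) (C : {set dnode}) : Prop :=
  exists2 c, c \in C & dreach (start v) c.

End EventGraph.

From mathcomp Require Import all_boot.

(* Since G is connected and has at least
   two vertices, there is a walk p in G starting at v0 that visits every vertex.
   Following p in dec(G) from any node (v0, X) with X ⊆ U_{|V} ends at the same
   node c: every element of U_{|V} is the label of some vertex of p, so its
   membership in the final set is decided by its last occurrence on p, whatever
   X was.  Every node of dec(G) first walks to some (v0, X), hence reaches c.
   A node reachable from everywhere determines the sink structure: its strongly
   connected component is a sink, and every sink component contains it (sinks
   are closed under reachability), hence is that component. *)

Set Implicit Arguments.
Unset Strict Implicit.
Unset Printing Implicit Defensive.

Section DecoratedWalks.
Variables (V U : finType) (e : rel V) (ins : V -> bool) (x : V -> U).

Local Notation node := (dnode x).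
Local Notation reach := (dreach e ins).

Lemma upd_sub (w : V) (X : {set U}) : X \subset UV x -> upd ins x w X \subset UV x.
Proof.
move=> sXU; rewrite /upd; case: (ins w).
  by rewrite subUset sub1set sXU andbT; apply/imsetP; exists w.
exact: subset_trans (subD1set _ _) sXU.
Qed.

Definition dstep (a : node) (w : V) : node :=
  exist _ (w, upd ins x w (val a).2) (upd_sub w (valP a)).

Definition run (X : {set U}) (p : seq V) : {set U} := foldl (fun X w => upd ins x w X) X p.

Definition dwalk (a : node) (p : seq V) : node := foldl dstep a p.

Lemma dwalk_val (a : node) (p : seq V) :
  val (dwalk a p) = (last (val a).1 p, run (val a).2 p).
Proof. by elim: p a => [|w p IHp] a; [case: a => [[]] | rewrite /= IHp]. Qed.

Lemma dwalk_reach (a : node) (p : seq V) : path e (val a).1 p -> reach a (dwalk a p).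
Proof.
rewrite /dreach /dwalk; elim: p a => [|w p IHp] a /=; first by move=> _; apply: connect0.
case/andP=> e_aw path_p; apply: connect_trans (IHp (dstep a w) path_p).
by apply: connect1; apply/andP; split.
Qed.

(* Two runs of p agree on y as soon as they start in agreement on y, or p
   contains a vertex labelled y (which overwrites the membership of y). *)
Lemma mem_run (p : seq V) (X Y : {set U}) (y : U) :
  ((y \in X) == (y \in Y)) || has (fun w => x w == y) p ->
  (y \in run X p) = (y \in run Y p).
Proof.
elim: p X Y => [|w p IHp] X Y /=; first by rewrite orbF => /eqP.
move=> agree; apply: IHp; rewrite /upd.
have [<-|neq_wy] := eqVneq (x w) y.
  by case: (ins w); rewrite ?in_setU1 ?in_setD1 eqxx.
have upd_y (Z : {set U}) : (y \in (if ins w then x w |: Z else Z :\ x w)) = (y \in Z).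
  by case: (ins w); rewrite ?in_setU1 ?in_setD1 eq_sym (negbTE neq_wy).
by rewrite !upd_y; move: agree; rewrite (negbTE neq_wy).
Qed.

Lemma run_forget (p : seq V) (X Y : {set U}) :
  (forall w : V, has (fun u => x u == x w) p) ->
  X \subset UV x -> Y \subset UV x -> run X p = run Y p.
Proof.
move=> p_labels sXU sYU; apply/setP => y; apply: mem_run.
have [/imsetP[w _ ->]|yNU] := boolP (y \in UV x); first by rewrite p_labels orbT.
by rewrite (negbTE (contra (subsetP sXU y) yNU)) (negbTE (contra (subsetP sYU y) yNU)).
Qed.

Lemma synchronizing_walk (v0 : V) (p : seq V) :
  (forall u v : V, connect e u v) -> path e v0 p ->
  (forall w : V, has (fun u => x u == x w) p) ->
  forall a : node, reach a (dwalk (start x v0) p).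
Proof.
move=> e_conn path_p p_labels a.
have /connectP[q path_q last_q] := e_conn (val a).1 v0.
set b := dwalk a q.
have b_v0 : (val b).1 = v0 by rewrite dwalk_val /= last_q.
have -> : dwalk (start x v0) p = dwalk b p.
  apply: val_inj; rewrite (dwalk_val (start x v0)) (dwalk_val b) b_v0 /=.
  by rewrite (run_forget p_labels (sub0set _) (valP b)).
have path_bp : path e (val b).1 p by rewrite b_v0.
exact: connect_trans (dwalk_reach path_q) (dwalk_reach path_bp).
Qed.

Lemma sink_closed (C : {set node}) (a b : node) :
  is_sink e ins C -> a \in C -> reach a b -> b \in C.
Proof.
case=> _ C_closed aC /connectP[p path_p ->].
by elim: p a aC path_p => [|w p IHp] a //= aC /andP[/(C_closed _ _ aC) wC /(IHp w wC)].
Qed.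

Definition scc_of (c : node) : {set node} := [set b | reach c b && reach b c].

Lemma scc_of_self (c : node) : c \in scc_of c.
Proof. by rewrite inE /dreach connect0. Qed.

Section UniversalNode.
Variables (c : node) (c_univ : forall a : node, reach a c).

Lemma scc_of_universal_sink : is_sink e ins (scc_of c).
Proof.
split; first by exists c.
move=> a b; rewrite /scc_of !inE !c_univ !andbT => c_a ab.
exact: connect_trans c_a (connect1 ab).
Qed.

(* Every sink component contains c, hence is its component. *)
Lemma sink_eq_scc_of_universal (C : {set node}) : is_sink e ins C -> C = scc_of c.
Proof.
move=> C_sink; have [[a C_def] _] := C_sink.
have aC : a \in C by rewrite C_def; exact: scc_of_self.
move: (sink_closed C_sink aC (c_univ a)); rewrite C_def inE => /andP[a_c c_a].
apply/setP => b; rewrite !inE; apply/andP/andP => -[b1 b2].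
  by split; [exact: connect_trans c_a b1 | exact: connect_trans b2 a_c].
by split; [exact: connect_trans a_c b1 | exact: connect_trans b2 c_a].
Qed.

End UniversalNode.
End DecoratedWalks.

Section CoveringWalks.
Variables (V : finType) (e : rel V) (e_conn : forall u v : V, connect e u v).

Lemma covering_walk (z : V) (s : seq V) :
  exists2 p, path e z p & {subset s <= z :: p}.
Proof.
elim: s z => [|u s IHs] z; first by exists [::].
have /connectP[q path_q last_q] := e_conn z u.
have [p path_p s_p] := IHs u.
exists (q ++ p); first by rewrite cat_path path_q -last_q.
have u_zq : u \in z :: q by rewrite last_q mem_last.
have sub_up : {subset u :: p <= z :: q ++ p}.
  move=> t; rewrite -cat_cons mem_cat inE => /predU1P[->|]; first by rewrite u_zq.
  by move=> tp; rewrite tp orbT.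
by move=> t; rewrite inE => /predU1P[->|/s_p /sub_up //]; apply: sub_up; rewrite mem_head.
Qed.

Lemma walk_through_all (v0 u : V) :
  u != v0 -> exists2 p, path e v0 p & forall w : V, w \in p.
Proof.
move=> u_v0; have /connectP[[|w1 q] path_q last_q] := e_conn v0 u.
  by rewrite last_q eqxx in u_v0.
case/andP: path_q => e_v0w1 _.
have [p path_p all_p] := covering_walk w1 (enum V).
exists (w1 :: p); first by rewrite /= e_v0w1.
by move=> w; apply: all_p; rewrite mem_enum.
Qed.

End CoveringWalks.

Theorem mainTheorem2 (V U : finType) (e : rel V) (ins : V -> bool) (x : V -> U)
  (v0 : V)
  (e_sym : symmetric e) (e_irr : irreflexive e)
  (e_conn : forall u v : V, connect e u v)
  (hins : forall v : V, exists u : V, x u = x v /\ ins u)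
  (hdel : forall v : V, exists u : V, x u = x v /\ ~~ ins u) :
  exists! C : {set dnode x},
    is_sink e ins C /\
    forall v : V, reachable_from e ins v C /\
      forall C' : {set dnode x}, is_sink e ins C' -> reachable_from e ins v C' -> C' = C.
Proof.
(* An insertion and a deletion node carry the label of v0: they are distinct. *)
have [u u_v0] : exists u, u != v0.
  have [[u1 [_ ins_u1]] [u2 [_ del_u2]]] := (hins v0, hdel v0).
  have [u1_v0|] := eqVneq u1 v0; last by exists u1.
  by exists u2; apply: contraNneq del_u2 => ->; rewrite -u1_v0 ins_u1.
have [p path_p all_p] := walk_through_all e_conn u_v0.
have p_labels (w : V) : has (fun u => x u == x w) p by apply/hasP; exists w.
have c_univ := synchronizing_walk ins e_conn path_p p_labels.
set c := dwalk ins (start x v0) p in c_univ.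
exists (scc_of e ins c); split.
  split; first exact: scc_of_universal_sink.
  move=> v; split=> [|C' C'_sink _]; last exact: sink_eq_scc_of_universal.
  by exists c; first exact: scc_of_self.
by move=> C [C_sink _]; apply/esym/sink_eq_scc_of_universal.
Qed.
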